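(* Let $\mathcal{Q}_1\subseteq\mathcal{Q}_2$ be congruences on $\mathbb{N}^d$. Then (i) $U(\mathcal{Q}_1)\subseteq U(\mathcal{Q}_2)$, and (ii) for each $\mathbf{q}\in\mathcal{Q}_2\setminus\mathcal{Q}_1$ there exists $\mathbf{p}\in U(\mathcal{Q}_2)\setminus U(\mathcal{Q}_1)$ with $\|\mathbf{p}\|\le\|\mathbf{q}\|$.
   Context: A congruence on $\mathbb{N}^d$ is an equivalence relation $\mathcal{Q}\subseteq\mathbb{N}^d\times\mathbb{N}^d$ with $(\mathbf{a},\mathbf{b})\in\mathcal{Q}\Rightarrow(\mathbf{a}+\mathbf{c},\mathbf{b}+\mathbf{c})\in\mathcal{Q}$ (seen as a subset of $\mathbb{N}^{2d}$). $\|\cdot\|$ is the maximum norm. For $X\subseteq\mathbb{N}^k$, $X\uparrow=\{\mathbf{y}\mid\exists\mathbf{x}\in X:\mathbf{x}\le\mathbf{y}\}$ (componentwise order). For a congruence $\mathcal{Q}$, $U(\mathcal{Q})\subseteq\mathbb{N}^{4d}$ is $U(\mathcal{Q})=\{(\mathbf{x},\mathbf{y},\mathbf{u},\mathbf{v})\mid(\mathbf{x},\mathbf{y})\in\mathcal{Q},(\mathbf{x}+\mathbf{u},\mathbf{y}+\mathbf{v})\in\mathcal{Q},(\mathbf{u},\mathbf{v})\ne(\mathbf{0},\mathbf{0})\}\uparrow$. *)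

From mathcomp Require Import all_boot.
Set Implicit Arguments. Unset Strict Implicit. Unset Printing Implicit Defensive.

Definition vec (d : nat) := 'I_d -> nat.

Definition vadd d (a b : vec d) : vec d := fun i => a i + b i.
Definition vzero d : vec d := fun _ => 0.
Definition vle d (a b : vec d) : Prop := forall i, a i <= b i.
Definition vnorm d (a : vec d) : nat := \max_(i < d) a i.

Definition congruence d (Q : vec d -> vec d -> Prop) : Prop :=
  (forall a, Q a a) /\
  (forall a b, Q a b -> Q b a) /\
  (forall a b c, Q a b -> Q b c -> Q a c) /\
  (forall a b c, Q a b -> Q (vadd a c) (vadd b c)).

(* Elements of N^{4d} are represented as quadruples (x,y,u,v). *)
Definition quad d := (vec d * vec d * vec d * vec d)%type.

Definition qle d (p p' : quad d) : Prop :=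
  let: (x, y, u, v) := p in let: (x', y', u', v') := p' in
  vle x x' /\ vle y y' /\ vle u u' /\ vle v v'.

Definition pnorm d (q : vec d * vec d) : nat := maxn (vnorm q.1) (vnorm q.2).
Definition qnorm d (p : quad d) : nat :=
  let: (x, y, u, v) := p in maxn (maxn (vnorm x) (vnorm y)) (maxn (vnorm u) (vnorm v)).

Definition Ugen d (Q : vec d -> vec d -> Prop) (p : quad d) : Prop :=
  let: (x, y, u, v) := p in
  Q x y /\ Q (vadd x u) (vadd y v) /\ ~ (forall i, u i = 0 /\ v i = 0).

Definition U d (Q : vec d -> vec d -> Prop) (p : quad d) : Prop :=
  exists p0, Ugen Q p0 /\ qle p0 p.

From mathcomp Require Import all_boot.
From mathcomp Require Import zify.
From Stdlib Require Import Classical FunctionalExtensionality.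

Set Implicit Arguments.
Unset Strict Implicit.
Unset Printing Implicit Defensive.

(* Part (i) holds because upward closure is monotone.  For (ii), let
   q = (a, b) and walk through Q1-pairs (x, y) <= q, starting at (0, 0).
   At such a pair, (x, y, a - x, b - y) generates U(Q2) and has norm at most
   ||q||.  If it lies outside U(Q1) we are done.  Otherwise some generator
   (x', y', u', v') of U(Q1) lies below it; the step (u', v') is valid at
   (x', y') and therefore at every Q1-pair above (x', y'), so (x + u', y + v')
   is again a Q1-pair below q.  The coordinate sum increases strictly, so the
   walk terminates. *)

Definition vsub d (a b : vec d) : vec d := fun i => a i - b i.
Definition vsum d (a : vec d) : nat := \sum_(i < d) a i.

Lemma vaddAC d (a b c : vec d) : vadd (vadd a b) c = vadd (vadd a c) b.
Proof. by apply: functional_extensionality => i; rewrite /vadd addnAC. Qed.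

Lemma vsubnKC d (a b : vec d) : vle a b -> vadd a (vsub b a) = b.
Proof. by move=> le_ab; apply: functional_extensionality => i; exact: subnKC. Qed.

Lemma vsub_eq0 d (a b : vec d) : vle a b -> (forall i, vsub b a i = 0) -> a = b.
Proof.
move=> le_ab sub0; apply: functional_extensionality => i; apply/eqP.
by rewrite eqn_leq le_ab -subn_eq0 [_ - _]sub0.
Qed.

Lemma vle_subr d (a b : vec d) : vle (vsub a b) a.
Proof. by move=> i; exact: leq_subr. Qed.

Lemma vnorm_le d (a b : vec d) : vle a b -> vnorm a <= vnorm b.
Proof.
move=> le_ab; apply/bigmax_leqP => i _.
exact: leq_trans (le_ab i) (leq_bigmax i).
Qed.

Lemma vsum_le d (a b : vec d) : vle a b -> vsum a <= vsum b.
Proof. by move=> le_ab; apply: leq_sum => i _. Qed.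

Lemma vsumD d (a b : vec d) : vsum (vadd a b) = vsum a + vsum b.
Proof. exact: big_split. Qed.

Lemma vsum_gt0 d (u v : vec d) :
  ~ (forall i, u i = 0 /\ v i = 0) -> 0 < vsum u + vsum v.
Proof.
move=> nz_uv; rewrite lt0n addn_eq0; apply/negP => /andP[].
rewrite !sum_nat_eq0 => /forallP u0 /forallP v0.
by apply: nz_uv => i; split; apply/eqP; [exact: u0 | exact: v0].
Qed.

Lemma qle_refl d (p : quad d) : qle p p.
Proof. by case: p => [[[x y] u] v]; do !split. Qed.

Lemma U_mono d (Q1 Q2 : vec d -> vec d -> Prop) (p : quad d) :
  (forall a b, Q1 a b -> Q2 a b) -> U Q1 p -> U Q2 p.
Proof.
move=> sQ12 [[[[x y] u] v] [[Qxy [Qxuyv nz_uv]] le_p]].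
by exists (x, y, u, v); do !split => //; exact: sQ12.
Qed.

Lemma Ugen_towards d (Q : vec d -> vec d -> Prop) (x y a b : vec d) :
  Q x y -> Q a b -> vle x a -> vle y b -> ~ (x = a /\ y = b) ->
  Ugen Q (x, y, vsub a x, vsub b y).
Proof.
move=> Qxy Qab le_xa le_yb neq_xy_ab; rewrite /Ugen !vsubnKC //.
split=> //; split=> // zero_step; apply: neq_xy_ab.
by split; apply: vsub_eq0 => // i; case: (zero_step i).
Qed.

Lemma qnorm_towards d (x y a b : vec d) :
  vle x a -> vle y b -> qnorm (x, y, vsub a x, vsub b y) <= pnorm (a, b).
Proof.
move=> /vnorm_le le_xa /vnorm_le le_yb; rewrite /qnorm /pnorm /=.
have := vnorm_le (vle_subr a x); have := vnorm_le (vle_subr b y); lia.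
Qed.

Section Congruence.

Variables (d : nat) (Q : vec d -> vec d -> Prop).
Hypothesis congrQ : congruence Q.

(* With w = x - x', the chain is
   x + u ~ y' + w + v ~ x + v ~ y + v. *)
Lemma congr_step_above (x' y' u v x y : vec d) :
  Q x' y' -> Q (vadd x' u) (vadd y' v) -> vle x' x -> vle y' y -> Q x y ->
  Q (vadd x u) (vadd y v).
Proof.
case: congrQ => _ [symQ [transQ addQ]] Qxy' Qstep le_x'x le_y'y Qxy.
pose w := vsub x x'.
have Q_xu : Q (vadd x u) (vadd (vadd y' w) v).
  by move: (addQ _ _ w Qstep); rewrite vaddAC vsubnKC // vaddAC.
have Q_y'w : Q (vadd y' w) x.
  by move: (addQ _ _ w (symQ _ _ Qxy')); rewrite vsubnKC.
exact: transQ Q_xu (transQ _ _ _ (addQ _ _ v Q_y'w) (addQ _ _ v Qxy)).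
Qed.

Lemma U_towards_step (x y a b : vec d) :
  U Q (x, y, vsub a x, vsub b y) -> Q x y -> vle x a -> vle y b ->
  exists x2 y2, [/\ Q x2 y2, vle x2 a, vle y2 b &
                    vsum x + vsum y < vsum x2 + vsum y2].
Proof.
move=> [[[[x' y'] u] v] [[Qxy' [Qstep nz_uv]] [le_x'x [le_y'y [le_u le_v]]]]].
move=> Qxy le_xa le_yb.
exists (vadd x u), (vadd y v); split.
- exact: congr_step_above Qxy' Qstep le_x'x le_y'y Qxy.
- by move=> i; have := le_u i; have := le_xa i; rewrite /vadd /vsub; lia.
- by move=> i; have := le_v i; have := le_yb i; rewrite /vadd /vsub; lia.
- by rewrite !vsumD; have := vsum_gt0 nz_uv; lia.
Qed.

End Congruence.

Lemma U_separating d (Q1 Q2 : vec d -> vec d -> Prop) (a b : vec d) :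
  congruence Q1 -> (forall a b, Q1 a b -> Q2 a b) -> Q2 a b -> ~ Q1 a b ->
  forall x y, Q1 x y -> vle x a -> vle y b ->
  exists p : quad d, U Q2 p /\ ~ U Q1 p /\ qnorm p <= pnorm (a, b).
Proof.
move=> congr1 sQ12 Q2ab nQ1ab.
suff walk n x y : vsum a + vsum b - (vsum x + vsum y) < n ->
    Q1 x y -> vle x a -> vle y b ->
    exists p : quad d, U Q2 p /\ ~ U Q1 p /\ qnorm p <= pnorm (a, b).
  by move=> x y; apply: walk; exact: ltnSn.
elim: n x y => [//|n IHn] x y lt_n Qxy le_xa le_yb.
have [UQ1p|nUQ1p] := classic (U Q1 (x, y, vsub a x, vsub b y)); last first.
  exists (x, y, vsub a x, vsub b y); split; last by split=> //; exact: qnorm_towards.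
  exists (x, y, vsub a x, vsub b y); split; last exact: qle_refl.
  apply: Ugen_towards => //; first exact: sQ12.
  by case=> eq_xa eq_yb; apply: nQ1ab; rewrite -eq_xa -eq_yb.
have [x2 [y2 [Qxy2 le_x2a le_y2b lt_sum]]] := U_towards_step congr1 UQ1p Qxy le_xa le_yb.
have le_sum_a := vsum_le le_x2a; have le_sum_b := vsum_le le_y2b.
apply: IHn Qxy2 le_x2a le_y2b; lia.
Qed.

Theorem lemma14 (d : nat) (Q1 Q2 : vec d -> vec d -> Prop) :
  congruence Q1 -> congruence Q2 ->
  (forall a b, Q1 a b -> Q2 a b) ->
  (forall p : quad d, U Q1 p -> U Q2 p) /\
  (forall q : vec d * vec d, Q2 q.1 q.2 -> ~ Q1 q.1 q.2 ->
     exists p : quad d, U Q2 p /\ ~ U Q1 p /\ qnorm p <= pnorm q).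
Proof.
move=> congr1 _ sQ12; split=> [p|[a b] /= Q2ab nQ1ab]; first exact: U_mono.
have [reflQ1 _] := congr1.
by apply: U_separating (@vzero d) (@vzero d) (reflQ1 _) _ _.
Qed.
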